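(* Let $p$ be a prime and let $L$ be a $\mathbb{Z}_p$-Lie lattice of dimension $d$ such that $d(\mathbb{Q}_p \otimes_{\mathbb{Z}_p} L) = d$. Then one of the following holds: (i) $L \cong \mathbb{Z}_p^d$ is abelian; (ii) $L = \mathbb{Z}_p x \oplus A$ for some $x\in L$, where $A \cong \mathbb{Z}_p^{d-1}$ is an abelian ideal of $L$ and $\mathrm{ad}(x)$ acts on $A$ as multiplication by $p^s$ for some $s \in \mathbb{N}_0$.
   Context: A $\mathbb{Z}_p$-Lie lattice of dimension $d$ is a free $\mathbb{Z}_p$-module of rank $d$ equipped with a $\mathbb{Z}_p$-bilinear Lie bracket. For a Lie algebra, $d(\cdot)$ denotes its minimal number of generators as a Lie algebra. $\mathbb{N}_0 = \{0,1,2,\dots\}$. *)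

From HB Require Import structures.
From mathcomp Require Import all_boot all_order all_algebra.
From mathcomp Require Import fraction.
Set Implicit Arguments. Unset Strict Implicit. Unset Printing Implicit Defensive.
Import Order.TTheory GRing.Theory Num.Theory.
Local Open Scope ring_scope.

(* R is (isomorphic to) the ring Z_p of p-adic integers: a p-adically complete
   discrete valuation ring of characteristic 0 with uniformizer p and residue
   field F_p. *)
Definition padic_integers (p : nat) (R : idomainType) : Prop :=
  [/\ p%:R != 0 :> R,
      ~~ (p%:R \is a @GRing.unit R),
      (forall x : R, x != 0 ->
         exists n : nat, exists u : R, u \is a GRing.unit /\ x = p%:R ^+ n * u),
      (forall x : R, exists k : nat, exists y : R, x = k%:R + p%:R * y)
    & (forall a : nat -> R,
         (forall n, exists y, a n.+1 - a n = p%:R ^+ n * y) ->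
         exists l : R, forall n, exists y, l - a n = p%:R ^+ n * y)].

Definition lie_br (R : comRingType) (d : nat) (c : 'I_d -> 'I_d -> 'rV[R]_d)
  (u v : 'rV[R]_d) : 'rV[R]_d :=
  \sum_(i < d) \sum_(j < d) (u 0 i * v 0 j) *: c i j.

Definition is_lie_bracket (R : comRingType) (d : nat)
  (c : 'I_d -> 'I_d -> 'rV[R]_d) : Prop :=
  (forall u, lie_br c u u = 0) /\
  (forall u v w, lie_br c u (lie_br c v w) + lie_br c v (lie_br c w u)
                 + lie_br c w (lie_br c u v) = 0).

(* Structure constants of Q_p (x) L, where Q_p = Frac(Z_p). *)
Definition frac_consts (R : idomainType) (d : nat)
  (c : 'I_d -> 'I_d -> 'rV[R]_d) : 'I_d -> 'I_d -> 'rV[{fraction R}]_d :=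
  fun i j => map_mx (@tofrac R) (c i j).

Definition lie_subalg (K : fieldType) (d : nat) (c : 'I_d -> 'I_d -> 'rV[K]_d)
  (V : 'rV[K]_d -> Prop) : Prop :=
  [/\ V 0, (forall u v, V u -> V v -> V (u + v)),
      (forall (a : K) u, V u -> V (a *: u))
    & (forall u v, V u -> V v -> V (lie_br c u v))].

Definition lie_generates (K : fieldType) (d : nat) (c : 'I_d -> 'I_d -> 'rV[K]_d)
  (n : nat) (g : 'I_n -> 'rV[K]_d) : Prop :=
  forall V, lie_subalg c V -> (forall i, V (g i)) -> forall v, V v.

Definition lie_min_gens (K : fieldType) (d : nat) (c : 'I_d -> 'I_d -> 'rV[K]_d)
  (n : nat) : Prop :=
  (exists g : 'I_n -> 'rV[K]_d, lie_generates c g) /\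
  (forall m (g : 'I_m -> 'rV[K]_d), lie_generates c g -> (n <= m)%N).

From HB Require Import structures.
From mathcomp Require Import all_boot all_order all_algebra.
From mathcomp Require Import fraction.
Import Order.TTheory GRing.Theory Num.Theory.
Local Open Scope ring_scope.
Set Implicit Arguments. Unset Strict Implicit. Unset Printing Implicit Defensive.

(* Over the fraction field K, a Lie algebra with d(K (x) L) = dim L admits no
   generating set of size d - 1.  Taking for such sets the basis with one
   vector removed (or modified) forces every bracket [e_i, e_j] into the span
   of e_i and e_j with [e_i, e_j] = f_i e_j - f_j e_i, i.e.
   [u, v] = f(u) v - f(v) u for a linear form f.  Pick a basis index k whose
   f_k has minimal p-adic valuation, f_k = p^s w with w a unit; then
   A = ker f is an abelian ideal with basis e_m - (f_m / f_k) e_k (m <> k),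
   and x = w^-1 e_k complements it with ad(x) = p^s on A. *)

Section Bracket.
Variables (R : comNzRingType) (d : nat) (c : 'I_d -> 'I_d -> 'rV[R]_d).

Lemma delta_coord (i t : 'I_d) : ('e_i : 'rV[R]_d) 0 t = (i == t)%:R.
Proof. by rewrite mxE eqxx eq_sym. Qed.

Lemma delta_coord_id (i : 'I_d) : ('e_i : 'rV[R]_d) 0 i = 1.
Proof. by rewrite delta_coord eqxx. Qed.

Lemma delta_coord_neq (i t : 'I_d) : i != t -> ('e_i : 'rV[R]_d) 0 t = 0.
Proof. by rewrite delta_coord => /negbTE ->. Qed.

Lemma lie_br_delta i j : lie_br c 'e_i 'e_j = c i j.
Proof.
rewrite /lie_br (bigD1 i) //= (bigD1 j) //= !delta_coord_id mul1r scale1r.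
rewrite [X in _ + X]big1 => [|m nmi]; last first.
  by rewrite big1 // => m' _; rewrite delta_coord_neq 1?eq_sym // mul0r scale0r.
by rewrite big1 ?addr0 // => m nmj; rewrite delta_coord_neq 1?eq_sym // mulr0 scale0r.
Qed.

Lemma lie_brDr u v w : lie_br c u (v + w) = lie_br c u v + lie_br c u w.
Proof.
rewrite /lie_br -big_split; apply: eq_bigr => i _; rewrite -big_split.
by apply: eq_bigr => j _; rewrite mxE mulrDr scalerDl.
Qed.

Lemma lie_brDl u v w : lie_br c (u + v) w = lie_br c u w + lie_br c v w.
Proof.
rewrite /lie_br -big_split; apply: eq_bigr => i _; rewrite -big_split.
by apply: eq_bigr => j _; rewrite mxE mulrDl scalerDl.
Qed.

Hypothesis alt : forall u, lie_br c u u = 0.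

Lemma lie_consts_diag i : c i i = 0.
Proof. by rewrite -lie_br_delta alt. Qed.

Lemma lie_consts_anti i j : c j i = - c i j.
Proof.
have := alt ('e_i + 'e_j).
rewrite lie_brDl !lie_brDr !lie_br_delta !lie_consts_diag add0r addr0.
by move/eqP; rewrite addrC addr_eq0 => /eqP.
Qed.

End Bracket.

Definition lin_form (R : pzRingType) d (a : 'cV[R]_d) (u : 'rV[R]_d) : R :=
  (u *m a) 0 0.

Lemma lin_formE (R : comNzRingType) d (a : 'cV[R]_d) u :
  lin_form a u = \sum_i u 0 i * a i 0.
Proof. by rewrite /lin_form mxE. Qed.

Lemma lin_formZ (R : pzRingType) d (a : 'cV[R]_d) r u :
  lin_form a (r *: u) = r * lin_form a u.
Proof. by rewrite /lin_form -scalemxAl mxE. Qed.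

Lemma lin_formB (R : pzRingType) d (a : 'cV[R]_d) u v :
  lin_form a (u - v) = lin_form a u - lin_form a v.
Proof. by rewrite /lin_form mulmxBl mxE [X in _ + X]mxE. Qed.

Lemma lin_form_delta (R : pzRingType) d (a : 'cV[R]_d) i : lin_form a 'e_i = a i 0.
Proof. by rewrite /lin_form -rowE mxE. Qed.

Lemma lie_br_rank_one (R : comNzRingType) d (c : 'I_d -> 'I_d -> 'rV[R]_d)
    (a : 'cV[R]_d) :
  (forall i j, c i j = a i 0 *: 'e_j - a j 0 *: 'e_i) ->
  forall u v, lie_br c u v = lin_form a u *: v - lin_form a v *: u.
Proof.
move=> hc u v; rewrite /lie_br !lin_formE.
under eq_bigr => i _ do under eq_bigr => j _ do rewrite hc scalerBr !scalerA.
under eq_bigr => i _ do rewrite sumrB.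
rewrite sumrB; congr (_ - _).
  rewrite [in RHS](row_sum_delta v) scaler_suml; apply: eq_bigr => i _.
  rewrite scaler_sumr; apply: eq_bigr => j _.
  by rewrite scalerA mulrAC.
rewrite exchange_big [in RHS](row_sum_delta u) scaler_suml; apply: eq_bigr => j _.
rewrite scaler_sumr; apply: eq_bigr => i _.
by rewrite scalerA; congr (_ *: _); rewrite [RHS]mulrC mulrA.
Qed.

Section Subalgebra.
Variables (K : fieldType) (d : nat) (c : 'I_d -> 'I_d -> 'rV[K]_d).
Variables (V : 'rV[K]_d -> Prop) (HV : lie_subalg c V).

Lemma lie_subalgD u v : V u -> V v -> V (u + v).
Proof. by case: HV => _ + _ _; apply. Qed.

Lemma lie_subalgZ a u : V u -> V (a *: u).
Proof. by case: HV => _ _ + _; apply. Qed.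

Lemma lie_subalgB u v : V u -> V v -> V (u - v).
Proof. by move=> Vu Vv; rewrite -scaleN1r; apply/lie_subalgD/lie_subalgZ. Qed.

Lemma lie_subalg_br u v : V u -> V v -> V (lie_br c u v).
Proof. by case: HV => _ _ _; apply. Qed.

Lemma lie_subalg_sum (P : pred 'I_d) F :
  (forall i, P i -> V (F i)) -> V (\sum_(i | P i) F i).
Proof.
move=> VF; elim/big_ind: _ => //; first by case: HV.
exact: lie_subalgD.
Qed.

Lemma lie_subalg_full : (forall m, V 'e_m) -> forall v, V v.
Proof.
move=> Ve v; rewrite (row_sum_delta v).
by apply: lie_subalg_sum => i _; apply: lie_subalgZ.
Qed.

Lemma lie_subalg_delta k w : V w -> w 0 k != 0 ->
  (forall m, m != k -> w 0 m != 0 -> V 'e_m) -> V 'e_k.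
Proof.
move=> Vw wk0 Ve.
have Vstrip : V (w - \sum_(m | m != k) w 0 m *: 'e_m).
  apply: lie_subalgB => //; apply: lie_subalg_sum => m nmk.
  have [->|wm0] := eqVneq (w 0 m) 0; first by rewrite scale0r; case: HV.
  exact/lie_subalgZ/Ve.
suff -> : 'e_k = (w 0 k)^-1 *: (w - \sum_(m | m != k) w 0 m *: 'e_m).
  exact: lie_subalgZ.
apply/rowP => t; rewrite !mxE summxE eqxx /=.
have [->|ntk] := eqVneq t k.
  rewrite big1 => [|m nmk]; last by rewrite mxE delta_coord_neq // mulr0.
  by rewrite subr0 mulVf.
rewrite (bigD1 t) //= big1 => [|m /andP[_ nmt]]; last first.
  by rewrite mxE delta_coord_neq // mulr0.
by rewrite mxE delta_coord_id mulr1 addr0 subrr mulr0.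
Qed.

End Subalgebra.

Lemma not_lie_generates_skip (K : fieldType) d
    (c : 'I_d.+1 -> 'I_d.+1 -> 'rV[K]_d.+1) (k : 'I_d.+1) (g : 'I_d.+1 -> 'rV[K]_d.+1) :
  lie_min_gens c d.+1 ->
  ~ (forall V, lie_subalg c V -> (forall m, m != k -> V (g m)) -> forall v, V v).
Proof.
move=> [_ min_d] gen; suff : (d < d)%N by rewrite ltnn.
apply: (min_d d (fun t => g (lift k t))) => V HV Vg v; apply: (gen V HV) => m.
by rewrite eq_sym => /unlift_some[t -> _].
Qed.

Section MinimalGeneration.
Variables (Zp : idomainType) (n : nat) (c : 'I_n.+1 -> 'I_n.+1 -> 'rV[Zp]_n.+1).
Hypothesis hmin : lie_min_gens (frac_consts c) n.+1.
Local Notation cK := (frac_consts c).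

Lemma frac_consts_coord i j t : cK i j 0 t = tofrac (c i j 0 t).
Proof. by rewrite mxE. Qed.

Lemma lie_consts_coord_out i j k : k != i -> k != j -> c i j 0 k = 0.
Proof.
move=> nki nkj; apply/eqP; apply: contraT => ck0.
case: (not_lie_generates_skip (k := k) (g := fun m => 'e_m) hmin) => V HV Ve.
apply: (lie_subalg_full HV) => m; have [->|] := eqVneq m k; last exact: Ve.
apply: (lie_subalg_delta HV (w := cK i j)) => [|| m' nm'k _]; last exact: Ve.
- by rewrite -lie_br_delta; apply: (lie_subalg_br HV); apply: Ve; rewrite eq_sym.
- by rewrite frac_consts_coord tofrac_eq0.
Qed.

(* Otherwise e_i, e_j + e_k and the e_m (m <> j, k) would generate K (x) L. *)
Lemma lie_consts_coord_eq i j k : i != j -> i != k -> j != k ->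
  c i j 0 j = c i k 0 k.
Proof.
move=> nij nik njk; apply/eqP; apply: contraT => cjk.
pose g m : 'rV[{fraction Zp}]_n.+1 := if m == j then 'e_j + 'e_k else 'e_m.
case: (not_lie_generates_skip (k := k) (g := g) hmin) => V HV Vg.
have Ve m : m != j -> m != k -> V 'e_m.
  by move=> nmj nmk; have := Vg m nmk; rewrite /g (negbTE nmj).
have Vy : V ('e_j + 'e_k) by have := Vg j njk; rewrite /g eqxx.
pose w := lie_br cK 'e_i ('e_j + 'e_k) - tofrac (c i j 0 j) *: ('e_j + 'e_k).
have wE t : w 0 t = tofrac (c i j 0 t) + tofrac (c i k 0 t)
                    - tofrac (c i j 0 j) * (('e_j + 'e_k : 'rV__) 0 t).
  by rewrite /w lie_brDr !lie_br_delta !mxE.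
have nkj : k != j by rewrite eq_sym.
have nki : k != i by rewrite eq_sym.
have nji : j != i by rewrite eq_sym.
have Vek : V 'e_k.
  apply: (lie_subalg_delta HV (w := w)) => [|| m nmk].
  - apply: (lie_subalgB HV); last exact: (lie_subalgZ HV).
    by apply: (lie_subalg_br HV) Vy; apply: Ve.
  - rewrite wE mxE delta_coord_id delta_coord_neq // (lie_consts_coord_out nki nkj).
    by rewrite tofrac0 !add0r mulr1 -tofracB tofrac_eq0 subr_eq0 eq_sym.
  have [->|nmj] := eqVneq m j; last by move=> _; apply: Ve.
  rewrite wE mxE delta_coord_id delta_coord_neq // (lie_consts_coord_out nji njk).
  by rewrite tofrac0 !addr0 mulr1 subrr eqxx.
apply: (lie_subalg_full HV) => m.
have [->//|nmk] := eqVneq m k; have [->|nmj] := eqVneq m j; last exact: Ve.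
by rewrite -(addrK 'e_k 'e_j); apply: (lie_subalgB HV).
Qed.

Lemma lie_consts_rank_one : (forall u, lie_br c u u = 0) ->
  exists a : 'cV[Zp]_n.+1, forall i j, c i j = a i 0 *: 'e_j - a j 0 *: 'e_i.
Proof.
move=> alt.
have [a ca] : exists a : 'cV[Zp]_n.+1, forall i j, i != j -> c i j 0 j = a i 0.
  exists (\col_i if [pick j | j != i] is Some j then c i j 0 j else 0).
  move=> i j nij; rewrite mxE.
  case: pickP => [j' nj'i | /(_ j)]; last by rewrite eq_sym nij.
  have [->//|njj'] := eqVneq j j'.
  by apply: lie_consts_coord_eq; rewrite // eq_sym.
exists a => i j; apply/rowP => t; rewrite !mxE eqxx /=.
have [<-|nij] := eqVneq i j; first by rewrite lie_consts_diag // mxE subrr.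
have [->|ntj] := eqVneq t j.
  by rewrite ca // eq_sym (negbTE nij) mulr0 mulr1 subr0.
have [->|nti] := eqVneq t i.
  by rewrite lie_consts_anti // mxE ca 1?eq_sym // mulr0 mulr1 sub0r.
by rewrite lie_consts_coord_out // !mulr0 subrr.
Qed.

End MinimalGeneration.

Lemma dvd_pow_unit (R : comUnitRingType) (x u u' : R) (m m' : nat) :
  u \is a GRing.unit -> (m <= m')%N -> exists q, x ^+ m' * u' = q * (x ^+ m * u).
Proof.
move=> hu le_mm'; exists (x ^+ (m' - m) * u' / u).
by rewrite [x ^+ m * u]mulrC mulrA mulrVK // mulrAC -exprD subnK.
Qed.

Lemma padic_dvd_total p (R : idomainType) : padic_integers p R ->
  forall a b : R, (exists q, b = q * a) \/ (exists q, a = q * b).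
Proof.
case=> _ _ val _ _ a b.
have [->|na] := eqVneq a 0; first by right; exists 0; rewrite mul0r.
have [->|nb] := eqVneq b 0; first by left; exists 0; rewrite mul0r.
have [m [u [hu ->]]] := val a na; have [m' [u' [hu' ->]]] := val b nb.
have [le_mm'|/ltnW le_m'm] := leqP m m'.
  by left; apply: dvd_pow_unit.
by right; apply: dvd_pow_unit.
Qed.

Lemma exists_dvd_all (R : pzSemiRingType) :
  (forall a b : R, (exists q, b = q * a) \/ (exists q, a = q * b)) ->
  forall n (f : 'I_n.+1 -> R), exists k, forall i, exists q, f i = q * f k.
Proof.
move=> total; elim=> [|n IH] f.
  by exists ord0 => i; rewrite ord1; exists 1; rewrite mul1r.
have [k fk] := IH (fun t => f (lift ord0 t)).
have [[q fq]|[q fq]] := total (f (lift ord0 k)) (f ord0).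
  exists (lift ord0 k) => i.
  by case: (unliftP ord0 i) => [t ->|->]; [apply: fk | exists q].
exists ord0 => i; case: (unliftP ord0 i) => [t ->|->]; last by exists 1; rewrite mul1r.
by have [q' ->] := fk t; exists (q' * q); rewrite fq mulrA.
Qed.

Section KernelDecomposition.
Variables (R : comUnitRingType) (n : nat) (c : 'I_n.+1 -> 'I_n.+1 -> 'rV[R]_n.+1).
Variables (a : 'cV[R]_n.+1) (k : 'I_n.+1) (q : 'I_n.+1 -> R) (r w : R).
Hypothesis br_rank_one : forall u v, lie_br c u v = lin_form a u *: v - lin_form a v *: u.
Hypothesis a_dvd : forall i, a i 0 = q i * a k 0.
Hypothesis ak_eq : a k 0 = r * w.
Hypothesis w_unit : w \is a GRing.unit.

Definition kernel_basis : 'M[R]_(n, n.+1) :=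
  \matrix_t ('e_(lift k t) - q (lift k t) *: 'e_k).

Definition kernel_complement : 'rV[R]_n.+1 := w^-1 *: 'e_k.

Local Notation B := kernel_basis.
Local Notation x := kernel_complement.

Lemma lin_form_kernel_basis (u : 'rV[R]_n) : lin_form a (u *m B) = 0.
Proof.
rewrite /lin_form -mulmxA; suff -> : B *m a = 0 by rewrite mulmx0 mxE.
apply/colP => t; have -> : (B *m a) t 0 = lin_form a (row t B).
  by rewrite lin_formE mxE; apply: eq_bigr => i _; rewrite [row t B 0 i]mxE.
by rewrite [RHS]mxE rowK lin_formB lin_formZ !lin_form_delta a_dvd subrr.
Qed.

Lemma lin_form_kernel_complement : lin_form a x = r.
Proof. by rewrite lin_formZ lin_form_delta ak_eq mulrCA mulVr ?mulr1. Qed.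

Lemma kernel_basis_entry t j :
  B t j = (lift k t == j)%:R - q (lift k t) * (k == j)%:R.
Proof. by rewrite !mxE /= eq_sym [k == j]eq_sym. Qed.

Lemma kernel_basis_coord_lift (u : 'rV[R]_n) t : (u *m B) 0 (lift k t) = u 0 t.
Proof.
rewrite mxE (bigD1 t) //= big1 => [|t' nt't]; last first.
  by rewrite kernel_basis_entry (inj_eq lift_inj) (negbTE nt't) (negbTE (neq_lift _ _))
    mulr0 subrr mulr0.
by rewrite kernel_basis_entry eqxx (negbTE (neq_lift _ _)) mulr0 subr0 mulr1 addr0.
Qed.

Lemma kernel_basis_coord_k (u : 'rV[R]_n) :
  (u *m B) 0 k = - \sum_t u 0 t * q (lift k t).
Proof.
rewrite mxE -sumrN; apply: eq_bigr => t _.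
by rewrite kernel_basis_entry eqxx eq_sym (negbTE (neq_lift _ _)) mulr1 sub0r mulrN.
Qed.

Lemma kernel_basis_inj (u : 'rV[R]_n) : u *m B = 0 -> u = 0.
Proof. by move=> uB0; apply/rowP => t; rewrite -kernel_basis_coord_lift uB0 !mxE. Qed.

Lemma kernel_decomposition_coord_lift r' (u : 'rV[R]_n) t :
  (r' *: x + u *m B) 0 (lift k t) = u 0 t.
Proof.
by rewrite mxE [_ 0 (lift k t)]mxE mxE delta_coord_neq ?neq_lift // !mulr0 add0r
  kernel_basis_coord_lift.
Qed.

Lemma kernel_decomposition_coord_k r' (u : 'rV[R]_n) :
  (r' *: x + u *m B) 0 k = r' * w^-1 - \sum_t u 0 t * q (lift k t).
Proof.
by rewrite mxE [_ 0 k]mxE mxE delta_coord_id mulr1 kernel_basis_coord_k.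
Qed.

Lemma kernel_decomposition v :
  exists! ru : R * 'rV[R]_n, v = ru.1 *: x + ru.2 *m B.
Proof.
pose u := \row_t v 0 (lift k t); pose S := \sum_t u 0 t * q (lift k t).
exists (w * (v 0 k + S), u); split.
  apply/rowP => j; case: (unliftP k j) => [t ->|->].
    by rewrite kernel_decomposition_coord_lift mxE.
  by rewrite kernel_decomposition_coord_k mulrAC mulrV // mul1r addrK.
move=> [r' u'] /= v_eq.
have u_eq : u' = u.
  by apply/rowP => t; rewrite mxE v_eq kernel_decomposition_coord_lift.
by rewrite v_eq /S -u_eq kernel_decomposition_coord_k subrK mulrCA mulrV ?mulr1.
Qed.

Lemma lie_br_kernel_basis v (u : 'rV[R]_n) :
  lie_br c v (u *m B) = (lin_form a v *: u) *m B.
Proof. by rewrite br_rank_one lin_form_kernel_basis scale0r subr0 scalemxAl. Qed.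

Lemma lie_br_kernel_basis_abelian (u u' : 'rV[R]_n) :
  lie_br c (u *m B) (u' *m B) = 0.
Proof. by rewrite lie_br_kernel_basis lin_form_kernel_basis scale0r mul0mx. Qed.

Lemma lie_br_kernel_complement (u : 'rV[R]_n) : lie_br c x (u *m B) = r *: (u *m B).
Proof. by rewrite lie_br_kernel_basis lin_form_kernel_complement scalemxAl. Qed.

End KernelDecomposition.

Theorem corollary2p3 (p : nat) (Zp : idomainType) (d : nat)
  (c : 'I_d -> 'I_d -> 'rV[Zp]_d) :
  prime p -> padic_integers p Zp -> is_lie_bracket c ->
  lie_min_gens (frac_consts c) d ->
  (forall u v, lie_br c u v = 0) \/
  exists x : 'rV[Zp]_d, exists B : 'M[Zp]_(d.-1, d), exists s : nat,
    [/\ (forall u : 'rV[Zp]_(d.-1), u *m B = 0 -> u = 0),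
        (forall v : 'rV[Zp]_d, exists! ru : Zp * 'rV[Zp]_(d.-1),
            v = ru.1 *: x + ru.2 *m B),
        (forall (v : 'rV[Zp]_d) (u : 'rV[Zp]_(d.-1)),
            exists w : 'rV[Zp]_(d.-1), lie_br c v (u *m B) = w *m B),
        (forall u w : 'rV[Zp]_(d.-1), lie_br c (u *m B) (w *m B) = 0)
      & (forall u : 'rV[Zp]_(d.-1),
            lie_br c x (u *m B) = (p ^ s)%:R *: (u *m B))].
Proof.
move=> _ hp [+ _].
case: d c => [|n] c alt hmin; first by left=> u v; rewrite /lie_br big_ord0.
have [a ha] := lie_consts_rank_one hmin alt.
have br_rank_one := lie_br_rank_one ha.
have [k a_dvd] := exists_dvd_all (padic_dvd_total hp) (fun i => a i 0).
have [q hq] := fin_all_exists a_dvd.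
have [ak0|nak0] := eqVneq (a k 0) 0.
  have a0 : a = 0 by apply/colP => i; rewrite hq ak0 mulr0 mxE.
  by left=> u v; rewrite br_rank_one a0 /lin_form !mulmx0 mxE !scale0r subrr.
have [_ _ val _ _] := hp; have [s [w [w_unit ak_eq]]] := val _ nak0.
right; exists (kernel_complement k w), (kernel_basis k q), s; split.
- exact: kernel_basis_inj.
- exact: kernel_decomposition.
- by move=> v u; eexists; apply: lie_br_kernel_basis.
- exact: lie_br_kernel_basis_abelian.
- by move=> u; rewrite natrX; apply: lie_br_kernel_complement.
Qed.
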